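(* Let $n\ge 1$ and let $H_n$ be the pyrene system with $n$ pyrene fragments. For every perfect matching $M$ of $H_n$, $f(H_n,M)=h(M)$.
   Context: Pyrene system: draw the hexagonal lattice so that every hexagon has two vertical sides; horizontally adjacent hexagons then share a vertical edge. For $n\ge1$, $H_n$ is the hexagonal system (the plane graph formed by the vertices and edges of the following $4n$ hexagons) consisting of a horizontal linear row of $2n$ hexagons $h_{1,1},h_{1,2},h_{2,1},h_{2,2},\dots,h_{n,1},h_{n,2}$, consecutive ones sharing a vertical edge, together with, for each $i=1,\dots,n$, a hexagon $s_{i,1}$ lying directly above and a hexagon $s_{i,2}$ lying directly below the common edge of $h_{i,1}$ and $h_{i,2}$ (each of $s_{i,1},s_{i,2}$ shares an edge with both $h_{i,1}$ and $h_{i,2}$). Each set $\{h_{i,1},h_{i,2},s_{i,1},s_{i,2}\}$ is a pyrene fragment. For a perfect matching $M$ of a graph $G$: a forcing set of $M$ is a subset $S\subseteq M$ contained in no other perfect matching of $G$; the forcing number $f(G,M)$ is the minimum size of a forcing set of $M$. A cycle is $M$-alternating if its edges alternate between $M$ and $E(G)\setminus M$. An $M$-resonant set is a set of pairwise vertex-disjoint $M$-alternating hexagons (faces), and $h(M)$ is the maximum size of an $M$-resonant set. *)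

From mathcomp Require Import all_boot.
Set Implicit Arguments. Unset Strict Implicit. Unset Printing Implicit Defensive.

(* Hexagonal lattice (hexagons with two vertical sides) drawn as a brick wall:
   vertices (x,y) in Z^2; (x,y)-(x+1,y) is an edge (a slanted side of the
   hexagonal drawing) and (x,y)-(x,y+1) is a vertical edge when x+y is even.
   The hexagon with anchor (i,j), i+j even, has cyclically ordered vertices
   (i,j),(i+1,j),(i+2,j),(i+2,j+1),(i+1,j+1),(i,j+1); its vertical sides are
   (i,j)-(i,j+1) and (i+2,j)-(i+2,j+1).  Hexagons (i,j),(i+2,j) are horizontally
   adjacent (share a vertical edge), and (i+1,j+1) / (i+1,j-1) lie directly
   above / below their common edge.

   H_n:  row hexagons h at anchors (2m+1,1), m = 0..2n-1
         (h_{k,1} = (4k+1,1), h_{k,2} = (4k+3,1)),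
         s_{k,1} at (4k+2,2) (above the common edge of h_{k,1},h_{k,2}),
         s_{k,2} at (4k+2,0) (below it),  k = 0..n-1.
   All coordinates lie in [0,4n+1] x [0,3]. *)

Definition V (n : nat) := ('I_(4 * n).+2 * 'I_4)%type.

Definition vtx (n x y : nat) : V n := (inord x, inord y).

Definition hexcoords (n : nat) : seq (nat * nat) :=
  [seq (2 * m + 1, 1) | m <- iota 0 (2 * n)]
  ++ [seq (4 * k + 2, 2) | k <- iota 0 n]
  ++ [seq (4 * k + 2, 0) | k <- iota 0 n].

Definition hexagons (n : nat) : {set V n} :=
  [set a : V n | ((a.1 : nat), (a.2 : nat)) \in hexcoords n].

Definition hv (n : nat) (a : V n) (k : 'I_6) : V n :=
  let x := (a.1 : nat) in let y := (a.2 : nat) in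
  match (k : nat) with
  | 0 => vtx n x y
  | 1 => vtx n x.+1 y
  | 2 => vtx n x.+2 y
  | 3 => vtx n x.+2 y.+1
  | 4 => vtx n x.+1 y.+1
  | _ => vtx n x y.+1
  end.

Definition hexV (n : nat) (a : V n) : {set V n} := [set hv a k | k : 'I_6].

Definition hexE (n : nat) (a : V n) (k : 'I_6) : {set V n} :=
  [set hv a k; hv a (ordS k)].

Definition Vset (n : nat) : {set V n} := \bigcup_(a in hexagons n) hexV a.
Definition Eset (n : nat) : {set {set V n}} :=
  \bigcup_(a in hexagons n) [set hexE a k | k : 'I_6].

Definition perfect_matching (n : nat) (M : {set {set V n}}) : bool :=
  (M \subset Eset n) &&
  [forall v in Vset n, #|[set e in M | v \in e]| == 1].

Definition forcing_set (n : nat) (M S : {set {set V n}}) : bool :=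
  (S \subset M) &&
  [forall M' : {set {set V n}},
     (perfect_matching M' && (S \subset M')) ==> (M' == M)].

(* f(H_n, M): minimum size of a forcing set of M (M itself is forcing) *)
Definition forcing_number (n : nat) (M : {set {set V n}}) : nat :=
  \big[minn/#|M|]_(S : {set {set V n}} | forcing_set M S) #|S|.

Definition alternating (n : nat) (M : {set {set V n}}) (a : V n) : bool :=
  [forall k : 'I_6, (hexE a k \in M) != (hexE a (ordS k) \in M)].

Definition resonant_set (n : nat) (M : {set {set V n}}) (R : {set V n}) : bool :=
  [&& R \subset hexagons n,
      [forall a in R, alternating M a] &
      [forall a in R, forall b in R, (a != b) ==> [disjoint hexV a & hexV b]]].

Definition hmax (n : nat) (M : {set {set V n}}) : nat :=
  \max_(R : {set V n} | resonant_set M R) #|R|.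

(* Lower bound h(M) <= f(M): a forcing set S of M meets every M-alternating
   hexagon of a resonant set, for otherwise switching M along that hexagon gives
   a second perfect matching containing S; the hexagons being disjoint, S has at
   least one edge per hexagon.

   Upper bound f(M) <= h(M): restricted to a pyrene fragment, M uses either both
   or none of the two horizontal edges entering it from the left, and given this
   it is one of eleven local patterns.  In each pattern h_{k,1} or h_{k,2} is
   M-alternating, or else both s_{k,1} and s_{k,2} are.  Selecting these hexagons
   in every fragment gives a resonant set, and one M-edge on each of them gives a
   forcing set of the same size: sweeping the fragments from left to right, the
   selected edges determine the pattern of each fragment in turn. *)

From mathcomp Require Import all_boot all_order zify.
Import Order.TTheory.
Set Implicit Arguments. Unset Strict Implicit. Unset Printing Implicit Defensive.

(** * Fragment coordinates *)

Lemma vtxK n x y : x <= 4 * n + 1 -> y <= 3 ->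
  ((vtx n x y).1 : nat) = x /\ ((vtx n x y).2 : nat) = y.
Proof. by move=> hx hy; rewrite /vtx /= !inordK //; lia. Qed.

Definition frag_vtx n k (d : nat * nat) : V n := vtx n (4 * k + d.1) d.2.

Lemma frag_vtx_inj n k k' d d' : k < n -> k' < n -> d.1 <= 5 -> d'.1 <= 5 ->
  d.2 <= 3 -> d'.2 <= 3 -> frag_vtx n k d = frag_vtx n k' d' ->
  4 * k + d.1 = 4 * k' + d'.1 /\ d.2 = d'.2.
Proof.
move=> hk hk' hx hx' hy hy' e.
have [x1 y1] := @vtxK n (4 * k + d.1) d.2 ltac:(lia) hy.
have [x2 y2] := @vtxK n (4 * k' + d'.1) d'.2 ltac:(lia) hy'.
move/(congr1 (fun v : V n => ((v.1 : nat), (v.2 : nat)))): e.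
by rewrite /= x1 y1 x2 y2 => -[].
Qed.

Lemma all_iota_lt (P : pred nat) m : all P (iota 0 m) -> forall t, t < m -> P t.
Proof. by move/allP=> h t ht; apply: h; rewrite mem_iota. Qed.

(* The hexagons h_{k,1}, h_{k,2}, s_{k,1}, s_{k,2} of fragment k are numbered
   t = 0, 1, 2, 3 and given by their lower left vertex, in fragment coordinates. *)
Definition hex_anchor (t : nat) : nat * nat :=
  match t with 0 => (1, 1) | 1 => (3, 1) | 2 => (2, 2) | _ => (2, 0) end.

Definition hex_offset (j : nat) : nat * nat :=
  match j with
  | 0 => (0, 0) | 1 => (1, 0) | 2 => (2, 0) | 3 => (2, 1) | 4 => (1, 1) | _ => (0, 1)
  end.

Definition hex_point (t j : nat) : nat * nat :=
  ((hex_anchor t).1 + (hex_offset j).1, (hex_anchor t).2 + (hex_offset j).2).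

Definition frag_hex n k t : V n := frag_vtx n k (hex_anchor t).

Lemma frag_hex_val n k t : k < n -> t < 4 ->
  ((frag_hex n k t).1 : nat) = 4 * k + (hex_anchor t).1 /\
  ((frag_hex n k t).2 : nat) = (hex_anchor t).2.
Proof. by move=> hk ht; apply: vtxK; case: t ht => [|[|[|[|t]]]] //=; lia. Qed.

Lemma mem_hexcoords n c : (c \in hexcoords n) =
  [exists k : 'I_n, exists t : 'I_4, c == (4 * k + (hex_anchor t).1, (hex_anchor t).2)].
Proof.
apply/idP/existsP => [|[k /existsP [t /eqP ->]]]; rewrite /hexcoords !mem_cat.
  case/orP => [|/orP []] /mapP [m]; rewrite mem_iota => hm ->.
  - have hm2 : m./2 < n by lia.
    exists (Ordinal hm2); apply/existsP; exists (inord (odd m)).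
    rewrite inordK; last by case: odd.
    by apply/eqP; case: odd (odd_double_half m) => /= e; congr pair; lia.
  - have {}hm : m < n by lia.
    by exists (Ordinal hm); apply/existsP; exists (inord 2); rewrite inordK.
  - have {}hm : m < n by lia.
    by exists (Ordinal hm); apply/existsP; exists (inord 3); rewrite inordK.
have hk := ltn_ord k; case: t => [[|[|[|[|t]]]] ht] //=.
- by apply/orP; left; apply/mapP; exists (2 * k); rewrite ?mem_iota; [lia|congr pair; lia].
- by apply/orP; left; apply/mapP; exists (2 * k).+1; rewrite ?mem_iota; [lia|congr pair; lia].
- by apply/orP; right; apply/orP; left; apply/mapP; exists (k : nat); rewrite ?mem_iota; [lia|].
- by apply/orP; right; apply/orP; right; apply/mapP; exists (k : nat); rewrite ?mem_iota; [lia|].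
Qed.

Lemma hexagonsP n (a : V n) :
  reflect (exists k t, [/\ k < n, t < 4 & a = frag_hex n k t]) (a \in hexagons n).
Proof.
rewrite inE mem_hexcoords.
apply: (iffP existsP) => [[k /existsP [t /eqP e]]|[k [t [hk ht ->]]]].
  exists k, t; split => //; case: a e => x y /= [ex ey].
  by rewrite /frag_hex /frag_vtx /vtx -ex -ey !inord_val.
have [-> ->] := frag_hex_val hk ht.
by exists (Ordinal hk); apply/existsP; exists (Ordinal ht).
Qed.

Lemma hv_frag_hex n k t (j : 'I_6) : k < n -> t < 4 ->
  hv (frag_hex n k t) j = frag_vtx n k (hex_point t j).
Proof.
move=> hk ht; rewrite /hv; have [-> ->] := frag_hex_val hk ht.
by rewrite /frag_vtx /hex_point; case: j => [[|[|[|[|[|[|j]]]]]] hj] //=; congr vtx; lia.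
Qed.

Lemma hex_point_bound t j : t < 4 -> j < 6 ->
  [&& 0 < (hex_point t j).1, (hex_point t j).1 <= 5 & (hex_point t j).2 <= 3].
Proof. by move=> ht; move: j; apply: all_iota_lt; move: t ht; apply: all_iota_lt. Qed.

Lemma hex_point_inj t j j' : t < 4 -> j < 6 -> j' < 6 ->
  hex_point t j = hex_point t j' -> j = j'.
Proof.
move=> ht hj hj' /eqP e; apply/eqP; move: e; apply/implyP.
move: j' hj'; apply: all_iota_lt; move: j hj; apply: all_iota_lt; move: t ht; apply: all_iota_lt.
by [].
Qed.

Lemma hv_inj n (a : V n) : a \in hexagons n -> injective (hv a).
Proof.
case/hexagonsP => [k [t [hk ht ->]]] j j'; rewrite !hv_frag_hex //.
have /and3P [_ b1 b2] := hex_point_bound ht (ltn_ord j).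
have /and3P [_ b1' b2'] := hex_point_bound ht (ltn_ord j').
case/frag_vtx_inj => // e1 e2; apply/val_inj/(hex_point_inj ht (ltn_ord j) (ltn_ord j')).
by rewrite [hex_point t j]surjective_pairing [hex_point t j']surjective_pairing e2; congr pair; lia.
Qed.

Lemma hex_points_meet t t' j j' : t < 4 -> t' < 4 -> j < 6 -> j' < 6 ->
  (hex_point t j).2 = (hex_point t' j').2 ->
  ((hex_point t j).1 = (hex_point t' j').1 -> (t, t') \notin [:: (2, 3); (3, 2)]) /\
  ((hex_point t j).1 = (hex_point t' j').1 + 4 -> t = 1 /\ t' = 0).
Proof.
move=> ht ht' hj hj' /eqP ey.
suff /andP [/implyP h1 /implyP h2] :
  (((hex_point t j).1 == (hex_point t' j').1) ==> ((t, t') \notin [:: (2, 3); (3, 2)])) &&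
  (((hex_point t j).1 == (hex_point t' j').1 + 4) ==> (t == 1) && (t' == 0)).
  by split => [/eqP /h1 //|/eqP /h2 /andP [/eqP -> /eqP ->]].
move: ey; apply/implyP; move: j' hj'; apply: all_iota_lt; move: j hj; apply: all_iota_lt.
by move: t' ht'; apply: all_iota_lt; move: t ht; apply: all_iota_lt.
Qed.

Lemma frag_hexes_meet n k k' t t' : k < n -> k' < n -> t < 4 -> t' < 4 -> k <= k' ->
  ~~ [disjoint hexV (frag_hex n k t) & hexV (frag_hex n k' t')] ->
  k = k' /\ (t, t') \notin [:: (2, 3); (3, 2)] \/ [/\ k' = k.+1, t = 1 & t' = 0].
Proof.
move=> hk hk' ht ht' le_kk' /pred0Pn [v /andP [/imsetP [j _ ->] /imsetP [j' _]]].
rewrite !hv_frag_hex //.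
have /and3P [x0 x5 y3] := hex_point_bound ht (ltn_ord j).
have /and3P [x0' x5' y3'] := hex_point_bound ht' (ltn_ord j').
case/frag_vtx_inj => // ex ey.
have [same shifted] := hex_points_meet ht ht' (ltn_ord j) (ltn_ord j') ey.
have [ek|lt_kk'] := eqVneq k k'; first by left; split => //; apply: same; subst; lia.
have [ek' [t1 t0]] : k' = k.+1 /\ t = 1 /\ t' = 0 by split; [|apply: shifted]; lia.
by right.
Qed.

Lemma hex_anchor_bound t :
  [&& 0 < (hex_anchor t).1, (hex_anchor t).1 <= 3 & (hex_anchor t).2 <= 3].
Proof. by case: t => [|[|[|t]]]. Qed.

Lemma hex_anchor_inj t t' : t < 4 -> t' < 4 -> hex_anchor t = hex_anchor t' -> t = t'.
Proof.
move=> ht ht' /eqP e; apply/eqP; move: e; apply/implyP.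
by move: t' ht'; apply: all_iota_lt; move: t ht; apply: all_iota_lt.
Qed.

Lemma frag_hex_inj n : injective (fun kt : 'I_n * 'I_4 => frag_hex n kt.1 kt.2).
Proof.
move=> [k t] [k' t'] /= e.
have /and3P [x0 x3 y3] := hex_anchor_bound t; have /and3P [x0' x3' y3'] := hex_anchor_bound t'.
have [x5 x5'] := (leq_trans x3 (isT : 3 <= 5), leq_trans x3' (isT : 3 <= 5)).
case/frag_vtx_inj: e => // ex ey; have ek : k = k' :> nat by lia.
have et : t = t' :> nat.
  have ex' : (hex_anchor t).1 = (hex_anchor t').1 by lia.
  apply: hex_anchor_inj; rewrite ?ltn_ord //.
  by rewrite [hex_anchor t]surjective_pairing [hex_anchor t']surjective_pairing ex' ey.
by congr pair; apply: val_inj.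
Qed.

(** * The lower bound *)

Section Switching.
Variables (n : nat) (M : {set {set V n}}).
Hypothesis pmM : perfect_matching M.

Lemma perfect_matching_sub : M \subset Eset n.
Proof. by case/andP: pmM. Qed.

Lemma perfect_matching_card v : v \in Vset n -> #|[set e in M | v \in e]| = 1.
Proof. by case/andP: pmM => _ /forall_inP h /h /eqP. Qed.

Lemma perfect_matching_uniq v e1 e2 : v \in Vset n ->
  e1 \in M -> e2 \in M -> v \in e1 -> v \in e2 -> e1 = e2.
Proof.
move=> hv h1 h2 v1 v2; have /eqP/cards1P [x hx] := perfect_matching_card hv.
have : e1 \in [set e in M | v \in e] by rewrite inE h1 v1.
have : e2 \in [set e in M | v \in e] by rewrite inE h2 v2.
by rewrite hx !inE => /eqP -> /eqP ->.
Qed.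

Definition hex_edges (a : V n) : {set {set V n}} := [set hexE a j | j : 'I_6].

Definition switch (a : V n) : {set {set V n}} := (M :\: hex_edges a) :|: (hex_edges a :\: M).

Lemma alternating_hex_edge a : alternating M a -> exists2 e, e \in M & e \in hex_edges a.
Proof.
move=> /forallP /(_ ord0); case h0: (hexE a ord0 \in M) => h1.
  by exists (hexE a ord0); rewrite ?imset_f.
by exists (hexE a (ordS ord0)); rewrite ?imset_f //; move: h1; case: (_ \in M).
Qed.

Lemma switch_perfect_matching a : a \in hexagons n -> alternating M a ->
  perfect_matching (switch a).
Proof.
move=> ha alt; apply/andP; split.
  apply/subsetP => e; rewrite !inE => /orP [/andP [_ /(subsetP perfect_matching_sub)] //|].
  by case/andP=> _ /imsetP [j _ ->]; apply/bigcupP; exists a => //; apply: imset_f.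
apply/forall_inP => v hvV; apply/eqP.
case: (boolP (v \in hexV a)) => [/imsetP [i _ ->]|hva]; last first.
  rewrite -[RHS](perfect_matching_card hvV); apply: eq_card => e; rewrite !inE.
  case: (boolP (e \in hex_edges a)) => [/imsetP [j _ ->]|_] /=; last by rewrite andbF orbF.
  suff -> : v \in hexE a j = false by rewrite !andbF.
  by apply: negbTE; apply: contra hva => /[!inE] /orP [] /eqP ->; apply: imset_f.
have hi : hv a i \in Vset n by apply/bigcupP; exists a => //; apply: imset_f.
have at_i e : e \in hex_edges a -> hv a i \in e -> e = hexE a i \/ e = hexE a (ord_pred i).
  move=> /imsetP [j _ ->] /[!inE] /orP [] /eqP /esym /(hv_inj ha) ej; first by left; rewrite ej.
  by right; rewrite -ej ordSK.
have /forallP /(_ (ord_pred i)) := alt; rewrite ord_predK.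
have e1E : hexE a (ord_pred i) \in hex_edges a by apply: imset_f.
have e2E : hexE a i \in hex_edges a by apply: imset_f.
have v1 : hv a i \in hexE a (ord_pred i) by rewrite !inE ord_predK eqxx orbT.
have v2 : hv a i \in hexE a i by rewrite !inE eqxx.
move: (hexE a (ord_pred i)) (hexE a i) e1E e2E v1 v2 at_i => e1 e2 e1E e2E v1 v2 at_i alt_i.
wlog [m1 m2] : e1 e2 e1E e2E v1 v2 at_i alt_i / e1 \in M /\ e2 \notin M.
  move=> W; case: (boolP (e1 \in M)) => m1.
    by apply: (W e1 e2) => //; split => //; move: alt_i; rewrite m1; case: (e2 \in M).
  apply: (W e2 e1) => //; first by move=> e he hie; case: (at_i e he hie); auto.
    by rewrite eq_sym.
  by split; [move: alt_i; rewrite (negbTE m1); case: (e2 \in M)|].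
suff -> : [set e in switch a | hv a i \in e] = [set e2] by rewrite cards1.
apply/setP => e; rewrite !inE; apply/idP/idP => [|/eqP ->]; last by rewrite e2E m2 v2 orbT.
case/andP=> /orP [/andP [eE eM]|/andP [eM eE]] he.
  by move: eE; rewrite -(perfect_matching_uniq hi m1 eM v1 he) e1E.
by case: (at_i e eE he) => ej; subst e; [rewrite eqxx | rewrite m1 in eM].
Qed.
End Switching.

Lemma card_le_hitting n (R : {set V n}) (S : {set {set V n}}) :
  {in R &, forall a b, a != b -> [disjoint hexV a & hexV b]} ->
  {in R, forall a, exists2 e, e \in S & e \in hex_edges a} -> #|R| <= #|S|.
Proof.
move=> disj hit; pose pick_edge a := odflt set0 [pick e in S | e \in hex_edges a].
have pickP a : a \in R -> pick_edge a \in S /\ pick_edge a \in hex_edges a.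
  rewrite /pick_edge; case: pickP => [e /andP [] //|none] /hit [e eS eA].
  by have := none e; rewrite eS eA.
have inj : {in R &, injective pick_edge}.
  move=> a b ha hb eab; apply/eqP; apply: contraT => nab.
  have [_ /imsetP [j _ ej]] := pickP a ha; have [_ /imsetP [j' _ ej']] := pickP b hb.
  have ja : hv a j \in hexV a by apply: imset_f.
  have jb : hv a j \in hexV b.
    have : hv a j \in hexE b j' by rewrite -ej' -eab ej !inE eqxx.
    by rewrite !inE => /orP [] /eqP ->; apply: imset_f.
  by rewrite (disjointFr (disj a b ha hb nab) ja) in jb.
rewrite -(card_in_imset inj); apply/subset_leq_card/subsetP => e /imsetP [a ha ->].
by case: (pickP a ha).
Qed.

Lemma forcing_set_hits n (M S : {set {set V n}}) (R : {set V n}) :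
  perfect_matching M -> forcing_set M S -> resonant_set M R ->
  {in R, forall a, exists2 e, e \in S & e \in hex_edges a}.
Proof.
move=> pmM /andP [sSM /forallP forcing] /and3P [/subsetP sRH /forall_inP altR _] a ha.
have [/exists_inP [e eS eA]|miss] := boolP [exists e in S, e \in hex_edges a].
  by exists e.
have := forcing (switch M a); rewrite switch_perfect_matching ?sRH ?altR //=.
have -> : S \subset switch M a.
  apply/subsetP => e eS; rewrite !inE (subsetP sSM e eS) andbT.
  by apply/orP; left; apply: contra miss => eA; apply/exists_inP; exists e.
move=> /eqP sw; have [e eM eA] := alternating_hex_edge (altR a ha).
by have := eM; rewrite -{1}sw !inE eA eM.
Qed.

Lemma forcing_number_le n (M S : {set {set V n}}) : forcing_set M S -> forcing_number M <= #|S|.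
Proof. by move=> hS; rewrite /forcing_number -minEnat; apply: (@bigmin_le_cond _ nat). Qed.

Lemma hmax_ge n (M : {set {set V n}}) R : resonant_set M R -> #|R| <= hmax M.
Proof. exact: leq_bigmax_cond. Qed.

Lemma hmax_le_forcing_number n (M : {set {set V n}}) :
  perfect_matching M -> hmax M <= forcing_number M.
Proof.
move=> pmM; apply/bigmax_leqP => R hR.
have disj : {in R &, forall a b, a != b -> [disjoint hexV a & hexV b]}.
  by case/and3P: hR => _ _ /forall_inP d a b ha hb; move/forall_inP/(_ b hb)/implyP: (d a ha).
rewrite /forcing_number -minEnat; apply: (@le_bigmin _ nat) => [|S hS].
  apply: card_le_hitting disj _ => a ha.
  by case/and3P: hR => _ /forall_inP /(_ a ha) /alternating_hex_edge.
exact: card_le_hitting disj (forcing_set_hits pmM hS hR).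
Qed.

(** * Local structure of a fragment *)

(* Labels 0 .. 17 and 20 are the edges of the four hexagons of fragment k; the
   right side 20 of h_{k,2} is also edge 0 of fragment k + 1, while 18 and 19 are
   the edges 8 and 9 of fragment k - 1, entering fragment k from the left. *)
Definition local_edge (i : nat) : (nat * nat) * (nat * nat) :=
  match i with
  | 0 => ((1, 1), (1, 2)) | 1 => ((1, 1), (2, 1)) | 2 => ((1, 2), (2, 2))
  | 3 => ((2, 1), (3, 1)) | 4 => ((2, 2), (3, 2)) | 5 => ((3, 1), (3, 2))
  | 6 => ((3, 1), (4, 1)) | 7 => ((3, 2), (4, 2)) | 8 => ((4, 1), (5, 1))
  | 9 => ((4, 2), (5, 2)) | 10 => ((2, 2), (2, 3)) | 11 => ((2, 3), (3, 3))
  | 12 => ((3, 3), (4, 3)) | 13 => ((4, 2), (4, 3)) | 14 => ((2, 0), (2, 1))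
  | 15 => ((2, 0), (3, 0)) | 16 => ((3, 0), (4, 0)) | 17 => ((4, 0), (4, 1))
  | 18 => ((0, 1), (1, 1)) | 19 => ((0, 2), (1, 2)) | 20 => ((5, 1), (5, 2))
  | _ => ((0, 0), (0, 0))
  end.

Definition local_ends (i : nat) : seq (nat * nat) := [:: (local_edge i).1; (local_edge i).2].

Definition frag_edge n k i : {set V n} :=
  [set frag_vtx n k (local_edge i).1; frag_vtx n k (local_edge i).2].

Definition hex_labels (t : nat) : seq nat :=
  match t with
  | 0 => [:: 1; 3; 5; 4; 2; 0] | 1 => [:: 6; 8; 20; 9; 7; 5]
  | 2 => [:: 4; 7; 13; 12; 11; 10] | _ => [:: 15; 16; 17; 6; 3; 14]
  end.

Definition hex_label (t j : nat) : nat := nth 0 (hex_labels t) j.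

Lemma hexE_frag_hex n k t (j : 'I_6) : k < n -> t < 4 ->
  hexE (frag_hex n k t) j = frag_edge n k (hex_label t j).
Proof.
move=> hk ht; rewrite /hexE !hv_frag_hex // /frag_edge.
by case: t ht => [|[|[|[|t]]]] // _; case: j => [[|[|[|[|[|[|j]]]]]] hj] //=;
  first [reflexivity | exact: setUC].
Qed.

Definition own_label (i : nat) : bool := (i < 18) || (i == 20).

Lemma own_label_lt i : own_label i -> i < 21.
Proof. by case/orP => [|/eqP ->]; lia. Qed.

Lemma hex_label_own t j : t < 4 -> j < 6 -> own_label (hex_label t j).
Proof. by move=> ht; move: j; apply: all_iota_lt; move: t ht; apply: all_iota_lt. Qed.

Lemma Eset_frag_edge n e : e \in Eset n ->
  exists k i, [/\ k < n, own_label i & e = frag_edge n k i].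
Proof.
case/bigcupP => a /hexagonsP [k [t [hk ht ->]]] /imsetP [j _ ->].
by exists k, (hex_label t j); rewrite hexE_frag_hex // hex_label_own.
Qed.

Lemma frag_edgeP n k i v :
  reflect (exists2 u : nat * nat, u \in local_ends i & v = frag_vtx n k u) (v \in frag_edge n k i).
Proof.
apply: (iffP idP) => [|[u hu ->]].
  by rewrite !inE => /orP [] /eqP ->; [exists (local_edge i).1 | exists (local_edge i).2];
    rewrite // /local_ends !inE eqxx ?orbT.
by move: hu; rewrite /local_ends !inE => /orP [] /eqP ->; rewrite eqxx ?orbT.
Qed.

Lemma local_ends_bound i (u : nat * nat) : u \in local_ends i -> (u.1 <= 5) && (u.2 <= 3).
Proof. by rewrite !inE => /orP [] /eqP ->; do 21![case: i => [//|i]]. Qed.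

Lemma mem_frag_edge n k i (d : nat * nat) : k < n -> d.1 <= 5 -> d.2 <= 3 ->
  (frag_vtx n k d \in frag_edge n k i) = (d \in local_ends i).
Proof.
move=> hk hx hy; apply/frag_edgeP/idP => [[u hu]|hd]; last by exists d.
have /andP [ux uy] := local_ends_bound hu.
case/frag_vtx_inj => // ex ey.
by rewrite [d]surjective_pairing ey (addnI ex) -surjective_pairing.
Qed.

Lemma frag_edge_inj n k i j : k < n -> i < 21 -> j < 21 ->
  frag_edge n k i = frag_edge n k j -> i = j.
Proof.
move=> hk hi hj e.
have sub i1 i2 : frag_edge n k i1 = frag_edge n k i2 ->
    all (fun u => u \in local_ends i2) (local_ends i1).
  move=> e12; apply/allP => u hu; have /andP [ux uy] := local_ends_bound hu.
  have := mem_frag_edge i1 hk ux uy; rewrite e12 mem_frag_edge // => ->; exact: hu.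
have h1 := sub _ _ e; have h2 := sub _ _ (esym e); clear e sub.
apply/eqP; move: h2; apply/implyP; move: h1; apply/implyP.
move: j hj; apply: all_iota_lt; move: i hi; apply: all_iota_lt.
by [].
Qed.

Definition frag_vertices : seq (nat * nat) :=
  [:: (1, 1); (1, 2); (2, 1); (2, 2); (3, 1); (3, 2); (4, 1); (4, 2);
      (2, 3); (3, 3); (4, 3); (2, 0); (3, 0); (4, 0)].

Definition end_vertices : seq (nat * nat) := [:: (5, 1); (5, 2)].

Definition local_vertices : seq (nat * nat) := frag_vertices ++ end_vertices.

Definition star (d : nat * nat) : seq nat :=
  match d with
  | (1, 1) => [:: 0; 1; 18] | (1, 2) => [:: 0; 2; 19]
  | (2, 1) => [:: 1; 3; 14] | (2, 2) => [:: 2; 4; 10]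
  | (3, 1) => [:: 3; 5; 6] | (3, 2) => [:: 4; 5; 7]
  | (4, 1) => [:: 6; 8; 17] | (4, 2) => [:: 7; 9; 13]
  | (2, 3) => [:: 10; 11] | (3, 3) => [:: 11; 12] | (4, 3) => [:: 12; 13]
  | (2, 0) => [:: 14; 15] | (3, 0) => [:: 15; 16] | (4, 0) => [:: 16; 17]
  | (5, 1) => [:: 8; 20] | (5, 2) => [:: 9; 20]
  | _ => [::]
  end.

Lemma star_spec (d : nat * nat) : d \in local_vertices ->
  star d = [seq i <- iota 0 21 | d \in local_ends i].
Proof. by move=> hd; apply/eqP; move: d hd; apply/allP. Qed.

(* The end vertices (5, 1) and (5, 2) are the vertices (1, 1) and (1, 2) of the
   next fragment, so fragment k owns them only when it is the last one. *)
Definition owned_vertex n k (d : nat * nat) : bool :=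
  (d \in frag_vertices) || (k.+1 == n) && (d \in end_vertices).

Lemma owned_local_vertex n k d : owned_vertex n k d -> d \in local_vertices.
Proof. by rewrite mem_cat => /orP [->|/andP [_ ->]]; rewrite ?orbT. Qed.

Lemma owned_vertex_bound n k (d : nat * nat) : owned_vertex n k d ->
  [/\ 0 < d.1, d.1 <= 5, d.2 <= 3 & d.1 = 5 -> k.+1 = n].
Proof.
case/orP => [hd|/andP [/eqP kn hd]].
  have /and3P [? ? ?] : [&& 0 < d.1, d.1 <= 4 & d.2 <= 3] by move: d hd; apply/allP.
  by split => //; lia.
have /andP [/eqP ? ?] : (d.1 == 5) && (d.2 <= 3) by move: d hd; apply/allP.
by split => //; lia.
Qed.

Lemma frag_vertex_Vset n k d : k < n -> d \in local_vertices ->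
  frag_vtx n k d \in Vset n.
Proof.
move=> hk hd.
have : has (fun t => has (fun j => hex_point t j == d) (iota 0 6)) (iota 0 4).
  by move: d hd; apply/allP.
case/hasP => t; rewrite mem_iota => ht /hasP [j]; rewrite mem_iota => hj /eqP <-.
apply/bigcupP; exists (frag_hex n k t); first by apply/hexagonsP; exists k, t.
by rewrite -[j]/(Ordinal hj : nat) -hv_frag_hex //; apply: imset_f.
Qed.

Definition shift_label (i : nat) : nat := match i with 8 => 18 | 9 => 19 | _ => 0 end.

Lemma frag_edge_shift n k i : i \in [:: 8; 9; 20] ->
  frag_edge n k.+1 (shift_label i) = frag_edge n k i.
Proof.
have e x : 4 * k.+1 + x = 4 * k + (4 + x) by lia.
by rewrite !inE => /or3P [] /eqP ->; rewrite /frag_edge /frag_vtx /= !e.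
Qed.

Lemma own_ends_pos i (u : nat * nat) : own_label i -> u \in local_ends i -> 0 < u.1.
Proof.
move=> hi hu; have i21 := own_label_lt hi; move: u hu; apply/allP.
by move: hi; apply/implyP; move: i i21; apply: all_iota_lt.
Qed.

Lemma own_ends_right i (u : nat * nat) : own_label i -> u \in local_ends i -> u.1 = 5 ->
  i \in [:: 8; 9; 20] /\ (1, u.2) \in local_ends (shift_label i).
Proof.
move=> hi hu /eqP u5; have i21 := own_label_lt hi; apply/andP.
move: u5; apply/implyP; move: u hu; apply/allP.
by move: hi; apply/implyP; move: i i21; apply: all_iota_lt.
Qed.

Lemma frag_star_complete n k (d : nat * nat) e : k < n -> owned_vertex n k d ->
  e \in Eset n -> frag_vtx n k d \in e -> exists2 i, i \in star d & e = frag_edge n k i.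
Proof.
move=> hk hd /Eset_frag_edge [k' [i [hk' hi ->]]] hde.
have hdv := owned_local_vertex hd; have [dx0 dx5 dy3 dx_end] := owned_vertex_bound hd.
have /frag_edgeP [u hu hdu] := hde.
have /andP [ux uy] := local_ends_bound hu; have u0 := own_ends_pos hi hu.
have [ex ey] := frag_vtx_inj hk hk' dx5 ux dy3 uy hdu.
(* An edge labelled in another fragment can only reach d from the previous one,
   as its edge 8, 9 or 20. *)
have [lt_k'k|lt_kk'|ek] := ltngtP k' k.
- have u5 : u.1 = 5 by lia.
  have d1 : d.1 = 1 by lia.
  have ek : k = k'.+1 by lia.
  have [hs hsu] := own_ends_right hi hu u5.
  exists (shift_label i); last by rewrite ek frag_edge_shift.
  rewrite star_spec // mem_filter mem_iota [d]surjective_pairing d1 ey hsu.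
  by move: hs; rewrite !inE => /or3P [] /eqP ->.
- have kn : k.+1 = n by apply: dx_end; lia.
  lia.
- subst k'; exists i => //; rewrite star_spec // mem_filter mem_iota own_label_lt //.
  by rewrite [d]surjective_pairing ey (addnI ex) -surjective_pairing hu.
Qed.

Fixpoint exactly_one (s : seq bool) : bool :=
  if s is b :: s' then (if b then all negb s' else exactly_one s') else false.

Lemma exactly_oneE s : exactly_one s = (count id s == 1).
Proof.
elim: s => //= b s ->; case: b => //=.
by rewrite add1n eqSS eqn0Ngt -has_count -all_predC.
Qed.

Definition frag_view n (M : {set {set V n}}) k : pred nat := fun i => frag_edge n k i \in M.

Lemma frag_star_exactly_one n (M : {set {set V n}}) k d : perfect_matching M -> k < n ->
  owned_vertex n k d -> exactly_one [seq frag_view M k i | i <- star d].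
Proof.
move=> pmM hk hd; rewrite exactly_oneE count_map.
have hdv := owned_local_vertex hd; have [_ dx dy _] := owned_vertex_bound hd.
have star_lt i : i \in star d -> i < 21 by rewrite star_spec // mem_filter mem_iota => /andP [].
set es := [seq frag_edge n k i | i <- star d].
have es_uniq : uniq es.
  rewrite map_inj_in_uniq ?star_spec ?filter_uniq ?iota_uniq // => i j hi hj.
  by apply: frag_edge_inj; rewrite // (star_lt i, star_lt j) // star_spec.
have := perfect_matching_card pmM (frag_vertex_Vset hk hdv).
have -> : #|[set e in M | frag_vtx n k d \in e]| = #|[seq e <- es | e \in M]|.
  apply: eq_card => e; rewrite inE mem_filter; apply: andb_id2l => eM.
  apply/idP/mapP => [|[i hi ->]].
    exact: frag_star_complete hk hd (subsetP (perfect_matching_sub pmM) e eM).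
  by move: hi; rewrite mem_frag_edge // star_spec // mem_filter => /andP [].
rewrite (card_uniqP _) ?filter_uniq // size_filter count_map => <-.
exact/eqP/eq_count.
Qed.

Definition local_matching (p : pred nat) : bool :=
  all (fun d => exactly_one [seq p i | i <- star d]) frag_vertices.

Lemma frag_view_local_matching n (M : {set {set V n}}) k : perfect_matching M -> k < n ->
  local_matching (frag_view M k).
Proof.
by move=> pmM hk; apply/allP => d hd; apply: frag_star_exactly_one; rewrite // /owned_vertex hd.
Qed.

Definition local_patterns : seq (seq nat) :=
  [:: [:: 6; 7; 10; 12; 14; 16; 18; 19]; [:: 5; 8; 9; 10; 12; 14; 16; 18; 19];
      [:: 4; 6; 11; 13; 14; 16; 18; 19]; [:: 3; 7; 10; 12; 15; 17; 18; 19];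
      [:: 3; 4; 11; 13; 15; 17; 18; 19]; [:: 1; 2; 5; 11; 13; 15; 17];
      [:: 0; 6; 7; 10; 12; 14; 16]; [:: 0; 5; 8; 9; 10; 12; 14; 16];
      [:: 0; 4; 6; 11; 13; 14; 16]; [:: 0; 3; 7; 10; 12; 15; 17];
      [:: 0; 3; 4; 11; 13; 15; 17]].

Lemma local_matching_pattern p : local_matching p -> p 18 = p 19 ->
  exists2 s, s \in local_patterns & forall i, i < 20 -> p i = (i \in s).
Proof.
move=> H E.
suff : [seq p i | i <- iota 0 20] \in [seq [seq i \in s | i <- iota 0 20] | s <- local_patterns].
  case/mapP => s hs e; exists s => // i hi.
  by have := congr1 (nth false ^~ i) e; rewrite !(nth_map 0) ?size_iota // nth_iota.
rewrite /local_matching /= in H; move: H E; cbn [iota map].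
move: (p 19) (p 18) (p 17) (p 16) (p 15) (p 14) (p 13) (p 12) (p 11) (p 10) (p 9) (p 8)
  (p 7) (p 6) (p 5) (p 4) (p 3) (p 2) (p 1) (p 0) => b19 b18 ? ? ? ? ? ? ? ? ? ? ? ? ? ? ? ? ? ?.
move=> H E.
rewrite -E in H *; clear E b19.
(* The unknowns were generalized in reverse, so the search below branches on them
   in label order: each vertex constraint is decided as soon as its first label
   is fixed, which prunes the search early. *)
repeat match goal with
  | H : is_true true |- _ => clear H
  | H : is_true false |- _ => discriminate H
  | H : is_true (_ && _) |- _ => case/andP: H => ? ?
  | b : bool |- _ => destruct b; cbn [exactly_one all negb andb] in *
  end.
all: by [].
Qed.

Definition hex_alternating (p : pred nat) (t : nat) : bool :=
  all (fun j => p (hex_label t j) != p (hex_label t (j.+1 %% 6))) (iota 0 6).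

Lemma hex_alternating_eq p q t : {in hex_labels t, p =1 q} ->
  hex_alternating p t = hex_alternating q t.
Proof.
have sz : size (hex_labels t) = 6 by case: t => [|[|[|[|t]]]].
move=> e; apply: eq_in_all => j; rewrite mem_iota => /= hj.
by rewrite !e // mem_nth // sz ?ltn_pmod.
Qed.

Lemma alternating_frag_hex n (M : {set {set V n}}) k t : k < n -> t < 4 ->
  alternating M (frag_hex n k t) = hex_alternating (frag_view M k) t.
Proof.
move=> hk ht; apply/forallP/allP => [h j|h j].
  by rewrite mem_iota => hj; have := h (Ordinal hj); rewrite !hexE_frag_hex.
by have := h j; rewrite mem_iota ltn_ord !hexE_frag_hex //; apply.
Qed.

Lemma hex_labels_lt20 t i : i \in hex_labels t -> (i < 20) || (i == 20) && (t == 1).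
Proof. by move: i; apply/allP; case: t => [|[|[|t]]]. Qed.

Definition chosen (p : pred nat) (t : nat) : bool :=
  match t with 0 => p 1 | 1 => p 8 | _ => ~~ p 1 && ~~ p 8 end.

(* [chosen_label p t] is the M-edge of the selected hexagon t that goes into the
   forcing set. *)
Definition chosen_label (p : pred nat) (t : nat) : nat :=
  match t with 0 => 1 | 1 => 8 | 2 => if p 4 then 4 else 7 | _ => if p 3 then 3 else 6 end.

Lemma chosen_eq p q t : (forall i, i < 20 -> p i = q i) ->
  chosen p t = chosen q t /\ chosen_label p t = chosen_label q t.
Proof. by move=> e; case: t => [|[|[|t]]] //=; rewrite ?e. Qed.

Lemma chosen_label_lt p t : chosen_label p t < 20.
Proof. by case: t => [|[|[|t]]] //=; case: ifP. Qed.

Lemma chosen_pair p t t' : ~~ (p 1 && p 8) -> t < 4 -> t' < 4 -> t != t' ->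
  chosen p t -> chosen p t' -> (t, t') \in [:: (2, 3); (3, 2)].
Proof.
by case: t => [|[|[|[|t]]]] //; case: t' => [|[|[|[|t']]]] //=; case: (p 1); case: (p 8).
Qed.

Lemma pattern_lt20 s : s \in local_patterns -> 20 \notin s.
Proof. by move: s; apply/allP. Qed.

Lemma pattern_exit s : s \in local_patterns -> (8 \in s) = (9 \in s).
Proof. by move=> hs; apply/eqP; move: s hs; apply/allP. Qed.

Lemma pattern_not_both s : s \in local_patterns -> ~~ ((1 \in s) && (8 \in s)).
Proof. by move: s; apply/allP. Qed.

Lemma pattern_chosen_alternating s t : s \in local_patterns -> t < 4 ->
  chosen (fun i => i \in s) t -> hex_alternating (fun i => i \in s) t.
Proof.
by move=> hs ht; apply/implyP; move: t ht; apply: all_iota_lt; move: s hs; apply/allP.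
Qed.

Lemma pattern_chosen_label s t : s \in local_patterns -> t < 4 ->
  chosen (fun i => i \in s) t -> chosen_label (fun i => i \in s) t \in s.
Proof.
by move=> hs ht; apply/implyP; move: t ht; apply: all_iota_lt; move: s hs; apply/allP.
Qed.

Lemma pattern_forced s s' : s \in local_patterns -> s' \in local_patterns ->
  (18 \in s) = (18 \in s') ->
  (forall t, t < 4 -> chosen (fun i => i \in s) t -> chosen_label (fun i => i \in s) t \in s') ->
  s = s'.
Proof.
move=> hs hs' /eqP e18 hc.
have : all (fun t => chosen (fun i => i \in s) t ==> (chosen_label (fun i => i \in s) t \in s'))
    (iota 0 4).
  by apply/allP => t; rewrite mem_iota => ht; apply/implyP; apply: hc.
move=> h; apply/eqP; move: h; apply/implyP; move: e18; apply/implyP; clear hc.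
by move: s' hs'; apply/allP; move: s hs; apply/allP.
Qed.

Lemma frag_edge_first_notin n i : i \in [:: 18; 19] -> frag_edge n 0 i \notin Eset n.
Proof.
move=> hi; apply/negP => /Eset_frag_edge [k [j [hk hj ej]]].
have [y ly yb] : exists2 y, (local_edge i).1 = (0, y) & y <= 3.
  by move: hi; rewrite !inE => /orP [] /eqP ->; [exists 1 | exists 2].
have /frag_edgeP [u hu] : frag_vtx n 0 (0, y) \in frag_edge n k j by rewrite -ej -ly !inE eqxx.
have /andP [ux uy] := local_ends_bound hu; have u0 := own_ends_pos hj hu.
by case/frag_vtx_inj => //=; lia.
Qed.

Lemma frag_view_shift n (M : {set {set V n}}) k i : i \in [:: 8; 9; 20] ->
  frag_view M k.+1 (shift_label i) = frag_view M k i.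
Proof. by move=> hi; rewrite /frag_view frag_edge_shift. Qed.

Section FragmentViews.
Variables (n : nat) (M : {set {set V n}}).
Hypothesis pmM : perfect_matching M.

Lemma frag_view_first i : i \in [:: 18; 19] -> frag_view M 0 i = false.
Proof.
by move=> hi; apply/negP => /(subsetP (perfect_matching_sub pmM)); apply/negP/frag_edge_first_notin.
Qed.

Lemma frag_entry_blocks k : k < n -> frag_view M k 18 -> ~~ frag_view M k 0 && ~~ frag_view M k 1.
Proof.
move=> hk; have := frag_star_exactly_one (d := (1, 1)) pmM hk isT => /=.
by case: (frag_view M k 0); case: (frag_view M k 1); case: (frag_view M k 18).
Qed.

Lemma frag_view_last : 0 < n -> frag_view M n.-1 20 = ~~ frag_view M n.-1 8.
Proof.
move=> hn; have hk : n.-1 < n by rewrite prednK.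
have own : owned_vertex n n.-1 (5, 1) by rewrite /owned_vertex prednK ?eqxx.
have := frag_star_exactly_one pmM hk own => /=.
by case: (frag_view M n.-1 8); case: (frag_view M n.-1 20).
Qed.

Lemma frag_exit_blocks k : k < n -> frag_view M k 8 -> frag_view M k 20 = false.
Proof.
move=> hk h8; case: (ltnP k.+1 n) => [hk1|hn].
  rewrite -(frag_view_shift _ _ (_ : 20 \in [:: 8; 9; 20])) //.
  have h18 : frag_view M k.+1 18 by rewrite -[18]/(shift_label 8) frag_view_shift.
  by have /andP [/negbTE] := frag_entry_blocks hk1 h18.
have ek : k = n.-1 by lia.
by rewrite ek frag_view_last -?ek ?h8 //; lia.
Qed.

Lemma frag_entry_balanced k : k < n -> frag_view M k 18 = frag_view M k 19.
Proof.
elim: k => [_|k IH hk]; first by rewrite !frag_view_first.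
have [s hs hp] := local_matching_pattern (frag_view_local_matching pmM (ltnW hk)) (IH (ltnW hk)).
rewrite -[18]/(shift_label 8) -[19]/(shift_label 9) !frag_view_shift //.
by rewrite !hp // pattern_exit.
Qed.

Lemma frag_pattern k : k < n ->
  exists2 s, s \in local_patterns & forall i, i < 20 -> frag_view M k i = (i \in s).
Proof.
move=> hk; exact: local_matching_pattern (frag_view_local_matching pmM hk) (frag_entry_balanced hk).
Qed.

End FragmentViews.

(** * The upper bound *)

Section Choice.
Variables (n : nat) (M : {set {set V n}}).
Hypothesis pmM : perfect_matching M.

Definition chosen_hexagons : {set 'I_n * 'I_4} :=
  [set kt : 'I_n * 'I_4 | chosen (frag_view M kt.1) kt.2].

Definition resonant_choice : {set V n} :=
  [set frag_hex n kt.1 kt.2 | kt : 'I_n * 'I_4 in chosen_hexagons].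

Definition forcing_choice : {set {set V n}} :=
  [set frag_edge n kt.1 (chosen_label (frag_view M kt.1) kt.2)
  | kt : 'I_n * 'I_4 in chosen_hexagons].

Lemma card_forcing_choice : #|forcing_choice| <= #|resonant_choice|.
Proof. by rewrite /resonant_choice (card_imset _ (@frag_hex_inj n)) leq_imset_card. Qed.

Lemma forcing_choice_sub : forcing_choice \subset M.
Proof.
apply/subsetP => _ /imsetP [[k t] /[!inE] /= c ->].
have [s hs hp] := frag_pattern pmM (ltn_ord k).
have [cs ->] := chosen_eq t hp; rewrite cs in c.
by rewrite -[_ \in M]/(frag_view M k _) hp ?chosen_label_lt // pattern_chosen_label.
Qed.

Lemma chosen_alternating k t : k < n -> t < 4 -> chosen (frag_view M k) t ->
  alternating M (frag_hex n k t).
Proof.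
move=> hk ht c; rewrite alternating_frag_hex //.
have [s hs hp] := frag_pattern pmM hk.
have [cs _] := chosen_eq t hp; rewrite cs in c.
rewrite (@hex_alternating_eq _ (fun i => i \in s)) ?pattern_chosen_alternating // => i.
case/hex_labels_lt20/orP => [/hp //|/andP [/eqP -> /eqP t1]].
rewrite (negbTE (pattern_lt20 hs)) frag_exit_blocks //.
by move: c; rewrite t1 /= -hp.
Qed.

Lemma chosen_disjoint k k' t t' : k < n -> k' < n -> t < 4 -> t' < 4 -> (k, t) != (k', t') ->
  chosen (frag_view M k) t -> chosen (frag_view M k') t' ->
  [disjoint hexV (frag_hex n k t) & hexV (frag_hex n k' t')].
Proof.
wlog le_kk' : k k' t t' / k <= k'.
  move=> W hk hk' ht ht' ne c c'; case: (leqP k k') => [|/ltnW] h; first exact: W.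
  by rewrite disjoint_sym; apply: W; rewrite // eq_sym.
move=> hk hk' ht ht' ne c c'; apply/negPn/negP.
case/(frag_hexes_meet hk hk' ht ht' le_kk') => [[ek nt]|[ek t1 t0]]; subst k'.
  have [s hs hp] := frag_pattern pmM hk.
  have nb : ~~ (frag_view M k 1 && frag_view M k 8) by rewrite !hp // pattern_not_both.
  have ne' : t != t' by apply: contra ne => /eqP ->.
  by rewrite (chosen_pair nb ht ht' ne' c c') in nt.
subst t t'; have h18 : frag_view M k.+1 18 by rewrite -[18]/(shift_label 8) frag_view_shift.
by have /andP [_ /negP] := frag_entry_blocks pmM hk' h18.
Qed.

Lemma resonant_choice_resonant : resonant_set M resonant_choice.
Proof.
apply/and3P; split.
- by apply/subsetP => _ /imsetP [[k t] _ ->]; apply/hexagonsP; exists k, t.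
- by apply/forall_inP => _ /imsetP [[k t] /[!inE] c ->]; apply: chosen_alternating.
apply/forall_inP => _ /imsetP [[k t] /[!inE] c ->].
apply/forall_inP => _ /imsetP [[k' t'] /[!inE] c' ->].
apply/implyP => ne; apply: chosen_disjoint => //=.
by apply: contra ne => /eqP [ek et]; apply/eqP; congr frag_hex.
Qed.

Lemma forcing_choice_agree_at (M' : {set {set V n}}) k : perfect_matching M' ->
  forcing_choice \subset M' -> k < n -> frag_view M' k 18 = frag_view M k 18 ->
  forall i, i < 20 -> frag_view M' k i = frag_view M k i.
Proof.
move=> pmM' sub hk e18.
have [s hs hp] := frag_pattern pmM hk; have [s' hs' hp'] := frag_pattern pmM' hk.
suff ess : s = s' by move=> i hi; rewrite hp ?hp' ?ess.
apply: pattern_forced => // [|t ht cs]; first by rewrite -hp // -hp' // e18.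
have [ec el] := chosen_eq t hp; rewrite -ec in cs; rewrite -el -hp' ?chosen_label_lt //.
apply: (subsetP sub); apply/imsetP; exists (Ordinal hk, Ordinal ht) => //.
by rewrite inE.
Qed.

Lemma forcing_choice_forcing : 0 < n -> forcing_set M forcing_choice.
Proof.
move=> hn; rewrite /forcing_set forcing_choice_sub; apply/forallP => M'.
apply/implyP => /andP [pmM' sub].
have agree k : k < n -> forall i, i < 20 -> frag_view M' k i = frag_view M k i.
  elim: k => [|k IH] hk; apply: forcing_choice_agree_at => //; first by rewrite !frag_view_first.
  by rewrite -[18]/(shift_label 8) !frag_view_shift // IH // ltnW.
have agree20 k : k < n -> frag_view M' k 20 = frag_view M k 20.
  move=> hk; case: (ltnP k.+1 n) => [hk1|hn1].
    have shift M0 : frag_view M0 k 20 = frag_view M0 k.+1 0.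
      by rewrite -[0]/(shift_label 20) frag_view_shift.
    by rewrite !shift agree.
  have ek : k = n.-1 by lia.
  by rewrite ek !frag_view_last // agree // -ek.
apply/eqP/setP => e; case: (boolP (e \in Eset n)) => [|he].
  case/Eset_frag_edge => k [i [hk /orP [hi|/eqP ->] ->]].
    by apply: agree => //; lia.
  exact: agree20.
have notin M0 : perfect_matching M0 -> e \in M0 = false.
  by move=> pm0; apply: contraNF he; apply/subsetP/perfect_matching_sub.
by rewrite !notin.
Qed.
End Choice.

Unset Implicit Arguments.

Theorem lemma2p3 (n : nat) (M : {set {set V n}}) :
  0 < n -> perfect_matching M -> forcing_number M = hmax M.
Proof.
move=> hn pmM; apply/eqP; rewrite eqn_leq hmax_le_forcing_number // andbT.
apply: leq_trans (forcing_number_le (forcing_choice_forcing pmM hn)) _.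
apply: leq_trans (card_forcing_choice M) _.
exact: hmax_ge (resonant_choice_resonant pmM).
Qed.
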